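(* Let $A$ be a bounded convex subset of $\mathbb R^2$ with non-empty interior, let $k,\ell\in\mathbb N$, and assume that the scaled grid problem over $\mathbb Z[i]$ for $A$ and $\sqrt2^{\,k}\sqrt5^{\,\ell}$ has at least two distinct solutions. Then for all $j\ge 0$, the scaled grid problem over $\mathbb Z[i]$ for $A$ and $\sqrt2^{\,k}\sqrt5^{\,\ell+2j}$ has at least $5^j+1$ solutions.
   Context: $\mathbb Z[i]$ is identified with $\mathbb Z^2\subseteq\mathbb R^2$. For a nonzero real $r$, a solution of the scaled grid problem over $\mathbb Z[i]$ for $A$ and $r$ is a point of $(rA)\cap\mathbb Z[i]$, where $rA=\{rv: v\in A\}$. *)

(* concrete reals R; R^2 is R * R, Z[i] is identified with Z * Z. *)
From Stdlib Require Import Reals ZArith List.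
Open Scope R_scope.

Definition pt := (R * R)%type.

Definition convex_set (A : pt -> Prop) : Prop :=
  forall p q : pt, A p -> A q -> forall t : R, 0 <= t <= 1 ->
    A (t * fst p + (1 - t) * fst q, t * snd p + (1 - t) * snd q).

Definition bounded_set (A : pt -> Prop) : Prop :=
  exists M : R, forall p : pt, A p -> Rabs (fst p) <= M /\ Rabs (snd p) <= M.

Definition nonempty_interior (A : pt -> Prop) : Prop :=
  exists (c : pt) (eps : R), 0 < eps /\
    forall p : pt, (fst p - fst c) ^ 2 + (snd p - snd c) ^ 2 < eps ^ 2 -> A p.

Definition scale_set (r : R) (A : pt -> Prop) : pt -> Prop :=
  fun p => exists v : pt, A v /\ p = (r * fst v, r * snd v).

Definition grid_solution (A : pt -> Prop) (r : R) (z : Z * Z) : Prop :=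
  scale_set r A (IZR (fst z), IZR (snd z)).

(** Write [r = sqrt 2 ^ k * sqrt 5 ^ l] and [N = 5 ^ j], so that the new scale is
    [r * N]. If [z1 <> z2] lie in [rA], convexity puts the whole segment [[z1, z2]]
    in [rA], hence [[N z1, N z2]] in [(r N) A]; this segment carries the [N + 1]
    distinct Gaussian integers [N z1 + t (z2 - z1)], [0 <= t <= N]. *)

From Stdlib Require Import Reals ZArith List Lra Lia FinFun.
Open Scope R_scope.

Lemma pow_sqrt_add_double (x : R) (l j : nat) :
  0 <= x -> sqrt x ^ (l + 2 * j) = sqrt x ^ l * x ^ j.
Proof.
  intros Hx. rewrite pow_add, pow_mult, pow2_sqrt by exact Hx. reflexivity.
Qed.

Lemma convex_scale_set (r : R) (A : pt -> Prop) :
  convex_set A -> convex_set (scale_set r A).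
Proof.
  intros HA p q [u [Hu ->]] [v [Hv ->]] t Ht.
  exists (t * fst u + (1 - t) * fst v, t * snd u + (1 - t) * snd v).
  split; [exact (HA u v Hu Hv t Ht)|].
  cbn [fst snd]. f_equal; ring.
Qed.

Lemma scale_set_mul (r c : R) (A : pt -> Prop) (p : pt) :
  scale_set r A p -> scale_set (r * c) A (c * fst p, c * snd p).
Proof.
  intros [v [Hv ->]]. exists v. split; [exact Hv|].
  cbn [fst snd]. f_equal; ring.
Qed.

Definition segment_point (N : nat) (z1 z2 : Z * Z) (t : nat) : Z * Z :=
  (Z.of_nat N * fst z1 + Z.of_nat t * (fst z2 - fst z1),
   Z.of_nat N * snd z1 + Z.of_nat t * (snd z2 - snd z1))%Z.

Definition lattice_segment (N : nat) (z1 z2 : Z * Z) : list (Z * Z) :=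
  map (segment_point N z1 z2) (seq 0 (N + 1)).

Lemma length_lattice_segment (N : nat) (z1 z2 : Z * Z) :
  length (lattice_segment N z1 z2) = (N + 1)%nat.
Proof. unfold lattice_segment. rewrite length_map, length_seq. reflexivity. Qed.

Lemma segment_point_inj (N : nat) (z1 z2 : Z * Z) :
  z1 <> z2 -> Injective (segment_point N z1 z2).
Proof.
  destruct z1 as [x1 y1], z2 as [x2 y2]. intros Hne a b Hab.
  unfold segment_point in Hab. cbn [fst snd] in Hab. injection Hab as Hx Hy.
  destruct (Z.eq_dec x1 x2) as [-> | Hx12].
  - assert (Hy12 : y1 <> y2) by (intros ->; exact (Hne eq_refl)).
    apply Nat2Z.inj, (Z.mul_cancel_r _ _ (y2 - y1)); lia.
  - apply Nat2Z.inj, (Z.mul_cancel_r _ _ (x2 - x1)); lia.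
Qed.

Lemma NoDup_lattice_segment (N : nat) (z1 z2 : Z * Z) :
  z1 <> z2 -> NoDup (lattice_segment N z1 z2).
Proof.
  intros Hne. apply Injective_map_NoDup; [exact (segment_point_inj N z1 z2 Hne)|].
  apply seq_NoDup.
Qed.

(* [segment_point N z1 z2 t] is [N] times the convex combination of [z1] and [z2]
   with weight [t / N] on [z2]. *)
Lemma grid_solution_segment_point (A : pt -> Prop) (r : R) (N t : nat)
    (z1 z2 : Z * Z) :
  convex_set A -> grid_solution A r z1 -> grid_solution A r z2 ->
  (0 < N)%nat -> (t <= N)%nat ->
  grid_solution A (r * INR N) (segment_point N z1 z2 t).
Proof.
  destruct z1 as [x1 y1], z2 as [x2 y2].
  intros HA H1 H2 HN HtN.
  apply lt_0_INR in HN. apply le_INR in HtN.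
  set (s := INR t / INR N).
  assert (Hs : 0 <= s <= 1).
  { assert (HsN : s * INR N = INR t) by (unfold s; field; lra).
    pose proof (pos_INR t). split; nra. }
  pose proof (scale_set_mul r (INR N) A _
                (convex_scale_set r A HA _ _ H2 H1 s Hs)) as Hmul.
  unfold grid_solution, segment_point. cbn [fst snd] in *.
  replace (IZR _, IZR _) with
    (INR N * (s * IZR x2 + (1 - s) * IZR x1),
     INR N * (s * IZR y2 + (1 - s) * IZR y1)); [exact Hmul|].
  rewrite !plus_IZR, !mult_IZR, !minus_IZR, <- !INR_IZR_INZ.
  unfold s. f_equal; field; lra.
Qed.

Lemma Forall_grid_solution_lattice_segment (A : pt -> Prop) (r : R) (N : nat)
    (z1 z2 : Z * Z) :
  convex_set A -> grid_solution A r z1 -> grid_solution A r z2 -> (0 < N)%nat ->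
  Forall (grid_solution A (r * INR N)) (lattice_segment N z1 z2).
Proof.
  intros HA H1 H2 HN. apply Forall_forall. intros z Hz.
  apply in_map_iff in Hz as [t [<- Ht]]. apply in_seq in Ht.
  apply grid_solution_segment_point; [exact HA | exact H1 | exact H2 | exact HN | lia].
Qed.

Theorem proposition5p19 (A : pt -> Prop) (k l : nat) :
  bounded_set A -> convex_set A -> nonempty_interior A ->
  (exists z1 z2 : Z * Z, z1 <> z2 /\
     grid_solution A (sqrt 2 ^ k * sqrt 5 ^ l) z1 /\
     grid_solution A (sqrt 2 ^ k * sqrt 5 ^ l) z2) ->
  forall j : nat, exists sols : list (Z * Z),
    NoDup sols /\ (5 ^ j + 1 <= length sols)%nat /\
    Forall (grid_solution A (sqrt 2 ^ k * sqrt 5 ^ (l + 2 * j))) sols.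
Proof.
  intros _ HA _ [z1 [z2 [Hne [H1 H2]]]] j.
  assert (Hscale : sqrt 2 ^ k * sqrt 5 ^ (l + 2 * j)
                   = sqrt 2 ^ k * sqrt 5 ^ l * INR (5 ^ j)).
  { rewrite pow_sqrt_add_double, pow_INR by lra.
    replace (INR 5) with 5 by (simpl; ring). ring. }
  assert (HN : (0 < 5 ^ j)%nat) by (apply Nat.neq_0_lt_0, Nat.pow_nonzero; lia).
  exists (lattice_segment (5 ^ j) z1 z2).
  split; [|split].
  - exact (NoDup_lattice_segment (5 ^ j) z1 z2 Hne).
  - rewrite length_lattice_segment. lia.
  - rewrite Hscale. exact (Forall_grid_solution_lattice_segment A _ (5 ^ j) z1 z2 HA H1 H2 HN).
Qed.
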